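(* For every weight function $\omega\colon\mathbb{N}\to\mathbb{R}^+$ and every $L\in\mathbb{N}$, the Forest distance $\mathrm{FD}_{L,\omega}$ is a well-defined pseudo-metric on $\mathcal{G}^{\mathbb{R}}_{n,d}$. In addition, for two graphs $G,H\in\mathcal{G}^{\mathbb{R}}_{n,d}$, $\mathrm{FD}_{L,\omega}(G,H)=0$ if and only if $G$ and $H$ are $1$-WL indistinguishable after $L$ iterations.
   Context: $\mathcal{G}^{\mathbb{R}}_{n,d}$ is the set of attributed graphs $(G,a_G)$ with $n$ vertices (undirected, no loops) and attribute function $a_G\colon V(G)\to\mathbb{R}^d\setminus\{\vec{0}\}$ (the zero vector is reserved for padding). The unrolling tree $\mathsf{unr}(G,u,L)$ is the rooted labeled tree defined inductively: for $L=0$ a single vertex labeled $a_G(u)$; for $L>0$ a root labeled $a_G(u)$ under which, for each neighbor $w$ of $u$, a copy of $\mathsf{unr}(G,w,L-1)$ is attached; the root has level $0$. Let $\mathcal{T}^L_G = \{\!\!\{ \tau(\mathsf{unr}(G,u,L)) : u\in V(G)\}\!\!\}$ (isomorphism types). Padding: in each tree of $\mathcal{T}^L_G$, to every vertex of level less than $L$ add children labeled $\vec{0}$ until it has exactly $n-1$ children. The disjoint union of the padded trees is the forest $F_{G,L}$; all such forests have the same unlabeled structure. For a vertex $u$ of $F_{G,L}$, $l(u)$ is its level. Then $\mathrm{FD}_{L,\omega}(G,H) = \min_{\varphi} \sum_{u\in V(F_{G,L})} \omega(l(u))\,\|a_G(u) - a_H(\varphi(u))\|_2$, where $a_G(u)$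 denotes the label of $u$ in the forest and the minimum ranges over all edge-preserving bijections $\varphi\colon V(F_{G,L})\to V(F_{H,L})$. $1$-WL on attributed graphs: $C_0(v)$ is the attribute of $v$ (injectively encoded), $C_t(v) = \mathsf{RELABEL}(C_{t-1}(v), \{\!\!\{C_{t-1}(u):u\in N(v)\}\!\!\})$ with injective $\mathsf{RELABEL}$, run on $G$ and $H$ in parallel; $G,H$ are $1$-WL indistinguishable after $L$ iterations if $\{\!\!\{C_L(v):v\in V(G)\}\!\!\} = \{\!\!\{C_L(v):v\in V(H)\}\!\!\}$. A pseudo-metric satisfies $\delta(x,x)=0$, symmetry and the triangle inequality. *)

From HB Require Import structures.
From mathcomp Require Import all_boot all_order all_algebra.
From mathcomp Require Import fingroup perm.
From mathcomp Require Import reals.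
Set Implicit Arguments. Unset Strict Implicit. Unset Printing Implicit Defensive.
Import Order.TTheory GRing.Theory Num.Theory.
Local Open Scope ring_scope.

Record agraph (R : realType) (n d : nat) := AGraph {
  adj  : rel 'I_n;
  attr : 'I_n -> 'rV[R]_d }.

(* Membership in G^R_{n,d}: undirected, loopless, attributes nonzero. *)
Definition valid_graph (R : realType) (n d : nat) (G : agraph R n d) : Prop :=
  [/\ forall u v, adj G u v = adj G v u,
      forall u, ~~ adj G u u
    & forall u, attr G u != 0].

Definition norm2 (R : realType) d (x : 'rV[R]_d) : R :=
  Num.sqrt (\sum_(j < d) x ord0 j ^+ 2).

(* Vertices of the (common unlabeled) forest: a tree index i : 'I_n and a
   path of child positions (each in 'I_(n-1)) of length k <= L from the root. *)
Definition fvert (n L : nat) : finType :=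
  ('I_n * {k : 'I_L.+1 & k.-tuple 'I_(n.-1)})%type.

Definition fpath n L (x : fvert n L) : seq 'I_(n.-1) := tagged x.2.
Definition flevel n L (x : fvert n L) : nat := size (fpath x).

Definition fparent n L (u v : fvert n L) : bool :=
  [&& u.1 == v.1,
      size (fpath v) == (size (fpath u)).+1
    & take (size (fpath u)) (fpath v) == fpath u].

Definition nbrs (R : realType) (n d : nat) (G : agraph R n d) (w : 'I_n) : seq 'I_n :=
  [seq x <- enum 'I_n | adj G w x].

(* The c-th child of the node corresponding to (unrolled) vertex w:
   the c-th neighbour of w if it exists, otherwise a padding vertex (None). *)
Definition fstep (R : realType) (n d : nat) (G : agraph R n d) (w : 'I_n) (c : 'I_(n.-1)) : option 'I_n :=
  if (c < size (nbrs G w))%N then Some (nth w (nbrs G w) c) else None.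

(* Following a path of child positions from the root of the unrolling tree of
   vertex i; None once a padding vertex is reached (padding vertices only have
   padding descendants). *)
Definition fwalk (R : realType) (n d : nat) (G : agraph R n d) (i : 'I_n) (p : seq 'I_(n.-1)) : option 'I_n :=
  foldl (fun o c => obind (fun w => fstep G w c) o) (Some i) p.

(* Label of a forest vertex in F_{G,L}: the attribute of the unrolled graph
   vertex, or the zero vector for padding vertices. Tree i of the forest is
   the padded unrolling tree unr(G,i,L). *)
Definition flabel (R : realType) (n d L : nat) (G : agraph R n d) (x : fvert n L) : 'rV[R]_d :=
  if fwalk G x.1 (fpath x) is Some w then attr G w else 0.

Definition edge_preserving n L (phi : {perm fvert n L}) : bool :=
  [forall u, forall v, fparent u v ==> fparent (phi u) (phi v)].

Definition fcost (R : realType) (n d L : nat) (w : nat -> R) (G H : agraph R n d)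
    (phi : {perm fvert n L}) : R :=
  \sum_(u : fvert n L) w (flevel u) * norm2 (flabel G u - flabel H (phi u)).

(* Forest distance: minimum of the cost over edge-preserving bijections
   (the identity is one, so the minimum over this finite nonempty set is
   the big-min seeded with the identity's cost). *)
Definition FD (R : realType) (n d L : nat) (w : nat -> R) (G H : agraph R n d) : R :=
  \big[Num.min/fcost w G H (1%g : {perm fvert n L})]_(phi : {perm fvert n L} | edge_preserving phi)
     fcost w G H phi.

(* Colours live in an eqType K; c0 encodes attributes, relabel takes the
   previous colour and the multiset of neighbour colours, the multiset being
   represented by a seq up to permutation: relabel is a well-defined injective
   function of (colour, multiset) iff
   relabel a s = relabel b t <-> (a = b /\ s, t are permutations). *)
Definition relabel_injective (K : eqType) (relabel : K -> seq K -> K) : Prop :=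
  forall a b s t, relabel a s = relabel b t <-> a = b /\ perm_eq s t.

Fixpoint wl_color (R : realType) (n d : nat) (K : eqType) (c0 : 'rV[R]_d -> K) (relabel : K -> seq K -> K)
    (G : agraph R n d) (t : nat) (v : 'I_n) : K :=
  match t with
  | 0 => c0 (attr G v)
  | t'.+1 => relabel (wl_color c0 relabel G t' v)
                     [seq wl_color c0 relabel G t' u | u <- nbrs G v]
  end.

Definition wl_indist (R : realType) (n d : nat) (K : eqType) (c0 : 'rV[R]_d -> K) (relabel : K -> seq K -> K)
    (L : nat) (G H : agraph R n d) : Prop :=
  perm_eq [seq wl_color c0 relabel G L v | v <- enum 'I_n]
          [seq wl_color c0 relabel H L v | v <- enum 'I_n].

(* An edge-preserving bijection of the padded forests fixes levels, and its cost
   is a weighted sum of label distances; inverses and composites of such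
   bijections give symmetry and the triangle inequality, and with positive
   weights FD(G,H) = 0 exactly when some edge-preserving bijection preserves
   every label.
   Such a bijection acts at each node as a permutation of the n-1 child
   positions.  One round of 1-WL has the same shape: x and y get equal colours
   after t+1 rounds iff they have equal colours after t rounds and a
   permutation of child positions matches the t-round colours of their
   children, padding children included.  By induction on t, a label-preserving
   bijection therefore matches the colours of corresponding unrolled vertices,
   in particular of the roots.  Conversely, from a colour-matching of the roots
   one builds such a bijection top-down, choosing at each node a permutation
   that matches the colours of the children. *)

From Pilot Require Import Defs.
From HB Require Import structures.
From mathcomp Require Import all_boot all_order all_algebra.
From mathcomp Require Import fingroup perm.
From mathcomp Require Import reals.
From mathcomp Require Import ring lra.
(* Gives [fpath] back its meaning from Defs, shadowed by path.v's notation. *)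
Import Defs.

Set Implicit Arguments. Unset Strict Implicit. Unset Printing Implicit Defensive.
Import Order.TTheory GRing.Theory Num.Theory.
Local Open Scope ring_scope.

Lemma cauchy_schwarz (R : realDomainType) (I : finType) (a b : I -> R) :
  (\sum_i a i * b i) ^+ 2 <= (\sum_i a i ^+ 2) * (\sum_i b i ^+ 2).
Proof.
have lagrange : \sum_i \sum_j (a i * b j - a j * b i) ^+ 2 =
    ((\sum_i a i ^+ 2) * (\sum_i b i ^+ 2) - (\sum_i a i * b i) ^+ 2) *+ 2.
  have expand i j : (a i * b j - a j * b i) ^+ 2 =
      a i ^+ 2 * b j ^+ 2 + b i ^+ 2 * a j ^+ 2 - (a i * b i * (a j * b j)) *+ 2.
    by ring.
  under eq_bigr => i _ do under eq_bigr => j _ do rewrite expand.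
  under eq_bigr => i _ do rewrite sumrB big_split /= sumrMnl -!mulr_sumr.
  rewrite sumrB big_split /= sumrMnl -!mulr_suml expr2 [(\sum_i b i ^+ 2) * _]mulrC.
  ring.
have : 0 <= \sum_i \sum_j (a i * b j - a j * b i) ^+ 2.
  by apply: sumr_ge0 => i _; apply: sumr_ge0 => j _; apply: sqr_ge0.
by rewrite lagrange pmulrn_lge0 // subr_ge0.
Qed.

Lemma perm_eq_ordP (T : eqType) m (f g : 'I_m -> T) :
  reflect (exists p : {perm 'I_m}, forall i, f i = g (p i))
          (perm_eq (map f (enum 'I_m)) (map g (enum 'I_m))).
Proof.
have -> : map g (enum 'I_m) = [tuple g i | i < m] by [].
apply: (iffP tuple_permP) => [[p /= f_gp]|[p f_gp]]; exists p.
  move=> i; have /eq_in_map/(_ i (mem_enum _ i)) := f_gp.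
  by rewrite tnth_mktuple.
by rewrite /= (eq_map f_gp); apply: eq_map => i; rewrite tnth_mktuple.
Qed.

Lemma enum_ord_pad (T : Type) m (s : seq T) x0 : (size s <= m)%N ->
  [seq if (i < size s)%N then Some (nth x0 s i) else None | i : 'I_m <- enum 'I_m] =
  map Some s ++ nseq (m - size s) None.
Proof.
set t := _ ++ _ => s_le; have size_t : size t = m by rewrite size_cat size_map size_nseq subnKC.
rewrite -[RHS](mkseq_nth None) size_t /mkseq -val_enum_ord -map_comp; apply: eq_map => i /=.
by rewrite nth_cat size_map; case: ifP => [lt_is|_]; rewrite ?(nth_map x0) ?nth_nseq ?if_same.
Qed.

Lemma perm_eq_pad (T : eqType) m (s t : seq T) :
  perm_eq (map Some s ++ nseq (m - size s) None) (map Some t ++ nseq (m - size t) None) =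
  perm_eq s t.
Proof.
have unpad k (r : seq T) : pmap id (map Some r ++ nseq k None) = r.
  by rewrite pmap_cat (@map_pK _ _ id Some (fun=> erefl)); elim: k => [|k /= ->]; rewrite ?cats0.
apply/idP/idP => [/(perm_pmap id)|st]; first by rewrite !unpad.
by rewrite (perm_size st) perm_cat2r perm_map.
Qed.

Lemma perm_homo_mono (T : finType) (e : rel T) (p : {perm T}) :
  {homo p : x y / e x y} -> {mono p : x y / e x y}.
Proof.
move=> p_homo x y; apply/idP/idP; last exact: p_homo.
pose E := [set xy : T * T | e xy.1 xy.2].
pose pp (xy : T * T) := (p xy.1, p xy.2).
have pp_inj : injective pp by move=> [a b] [a' b'] [/perm_inj -> /perm_inj ->].
have pp_sub : pp @: E \subset E.
  by apply/subsetP => _ /imsetP [xy + ->]; rewrite !inE; apply: p_homo.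
have ppE : pp @: E = E by apply/eqP; rewrite eqEcard pp_sub (card_imset _ pp_inj) leqnn.
move=> pxy; have : (p x, p y) \in pp @: E by rewrite ppE inE.
case/imsetP => [[a b]].
by rewrite inE => ab [/perm_inj -> /perm_inj ->].
Qed.

Section EuclideanNorm.
Variables (R : realType) (d : nat).
Implicit Types x y z : 'rV[R]_d.

Lemma norm2_ge0 x : 0 <= norm2 x.
Proof. exact: sqrtr_ge0. Qed.

Lemma norm2_eq0 x : (norm2 x == 0) = (x == 0).
Proof.
rewrite /norm2 sqrtr_eq0; apply/idP/eqP => [sum_le0|->]; last first.
  by rewrite big1 // => j _; rewrite mxE expr0n.
have sq_ge0 j : true -> 0 <= x ord0 j ^+ 2 by move=> _; apply: sqr_ge0.
have /psumr_eq0P sq_eq0 : \sum_j x ord0 j ^+ 2 = 0.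
  by apply/eqP; rewrite eq_le sum_le0 sumr_ge0.
apply/rowP => j; apply/eqP; rewrite mxE -sqrf_eq0; apply/eqP; exact: sq_eq0.
Qed.

Lemma norm2_0 : norm2 (0 : 'rV[R]_d) = 0.
Proof. by apply/eqP; rewrite norm2_eq0. Qed.

Lemma norm2N x : norm2 (- x) = norm2 x.
Proof. by rewrite /norm2; congr Num.sqrt; apply: eq_bigr => j _; rewrite mxE sqrrN. Qed.

Lemma norm2D x y : norm2 (x + y) <= norm2 x + norm2 y.
Proof.
rewrite /norm2; set A := \sum_j x ord0 j ^+ 2; set B := \sum_j y ord0 j ^+ 2.
have A_ge0 : 0 <= A by apply: sumr_ge0 => j _; apply: sqr_ge0.
have B_ge0 : 0 <= B by apply: sumr_ge0 => j _; apply: sqr_ge0.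
set S := \sum_j x ord0 j * y ord0 j.
have expand : \sum_j (x + y) ord0 j ^+ 2 = A + S *+ 2 + B.
  rewrite -sumrMnl -!big_split /=; apply: eq_bigr => j _; rewrite mxE; ring.
have S_le : S <= Num.sqrt A * Num.sqrt B.
  rewrite -sqrtrM // (le_trans (ler_norm S)) // -sqrtr_sqr ler_wsqrtr //.
  exact: cauchy_schwarz.
rewrite expand -[_ + Num.sqrt B]ger0_norm ?addr_ge0 ?sqrtr_ge0 // -sqrtr_sqr.
rewrite ler_wsqrtr // sqrrD !sqr_sqrtr //.
have : S *+ 2 <= (Num.sqrt A * Num.sqrt B) *+ 2 by rewrite lerMn2r.
lra.
Qed.

Lemma norm2_distC x y : norm2 (x - y) = norm2 (y - x).
Proof. by rewrite -norm2N opprB. Qed.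

Lemma norm2_dist_triangle x y z : norm2 (x - z) <= norm2 (x - y) + norm2 (y - z).
Proof. by rewrite -[x - z](subrKA y) norm2D. Qed.

End EuclideanNorm.

Section Forest.
Variables n L : nat.
Implicit Types (u v : fvert n L) (phi : {perm fvert n L}).

Lemma fvert_eq u v : u.1 = v.1 -> fpath u = fpath v -> u = v.
Proof.
move: u v => [i [k s]] [j [k' s']] /= ->; rewrite /fpath /= => eq_s.
have eq_k : k = k' by apply: val_inj; rewrite /= -(size_tuple s) -(size_tuple s') eq_s.
by case: k' / eq_k s' eq_s => s' eq_s; rewrite (val_inj eq_s).
Qed.

Lemma exists_fvert (i : 'I_n) (s : seq 'I_(n.-1)) :
  (size s <= L)%N -> exists v : fvert n L, v.1 = i /\ fpath v = s.
Proof.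
move=> s_le; pose k : 'I_L.+1 := Ordinal (s_le : size s < L.+1)%N.
by exists (i, existT (fun k : 'I_L.+1 => k.-tuple 'I_(n.-1)) k (in_tuple s)).
Qed.

Lemma flevel_le u : (flevel u <= L)%N.
Proof. by case: u => i [k s]; rewrite /flevel /fpath /= size_tuple -ltnS. Qed.

Lemma fparentP u v :
  reflect (v.1 = u.1 /\ exists c, fpath v = rcons (fpath u) c) (fparent u v).
Proof.
apply: (iffP and3P) => [[/eqP -> /eqP size_v /eqP take_v]|[-> [c ->]]]; last first.
  by rewrite size_rcons -cats1 take_size_cat.
split=> //; rewrite -(cat_take_drop (size (fpath u)) (fpath v)) take_v.
have : size (drop (size (fpath u)) (fpath v)) = 1%N by rewrite size_drop size_v subSnn.
by case: drop => [|c [|]] // _; exists c; rewrite cats1.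
Qed.

Lemma fparent_level u v : fparent u v -> flevel v = (flevel u).+1.
Proof. by rewrite /flevel => /fparentP [_ [c ->]]; rewrite size_rcons. Qed.

Lemma exists_fparent v : (0 < flevel v)%N -> exists u, fparent u v.
Proof.
rewrite /flevel => v_pos; have [s [c path_v]] : exists s c, fpath v = rcons s c.
  by move: v_pos; case: (fpath v) / lastP => // s c _; exists s, c.
have /ltnW /(exists_fvert v.1) [u [u1 path_u]] : (size s < L)%N.
  by have := flevel_le v; rewrite /flevel path_v size_rcons.
by exists u; apply/fparentP; split; [|exists c; rewrite path_u].
Qed.

Lemma edge_preservingP phi :
  reflect {homo phi : u v / fparent u v} (edge_preserving phi).
Proof.
apply: (iffP forallP) => [ep u v|ep u]; first exact: (implyP (forallP (ep u) v)).
by apply/forallP => v; apply/implyP/ep.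
Qed.

Lemma edge_preserving_mono phi :
  edge_preserving phi -> {mono phi : u v / fparent u v}.
Proof. by move/edge_preservingP; apply: perm_homo_mono. Qed.

Lemma edge_preserving1 : edge_preserving (1%g : {perm fvert n L}).
Proof. by apply/edge_preservingP => u v; rewrite !perm1. Qed.

Lemma edge_preservingV phi : edge_preserving phi -> edge_preserving phi^-1%g.
Proof.
move/edge_preserving_mono => ep; apply/edge_preservingP => u v.
by move=> uv; rewrite -ep !permKV.
Qed.

Lemma edge_preservingM phi psi :
  edge_preserving phi -> edge_preserving psi -> edge_preserving (phi * psi)%g.
Proof.
move=> /edge_preservingP ep_phi /edge_preservingP ep_psi.
by apply/edge_preservingP => u v uv; rewrite !permM; apply/ep_psi/ep_phi.
Qed.

Lemma edge_preserving_level phi :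
  edge_preserving phi -> forall u, flevel (phi u) = flevel u.
Proof.
move=> ep u; have [k] := ubnP (flevel u); elim: k u => // k IH u.
case: (posnP (flevel u)) => [u_root _|u_pos].
  case: (posnP (flevel (phi u))) => [-> //|/exists_fparent [x]].
  rewrite -[x](permKV phi) (edge_preserving_mono ep) => /fparent_level.
  by rewrite u_root.
have [p p_u] := exists_fparent u_pos; rewrite ltnS (fparent_level p_u) => lt_pk.
rewrite (fparent_level (edge_preservingP _ ep _ _ p_u)).
by rewrite IH // ltnW.
Qed.

Lemma edge_preserving_children phi u : edge_preserving phi -> (flevel u < L)%N ->
  exists pi : {perm 'I_(n.-1)}, forall c, exists v,
    [/\ fparent u v, fpath v = rcons (fpath u) c & fpath (phi v) = rcons (fpath (phi u)) (pi c)].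
Proof.
move=> ep u_lt; have child c : exists vc : fvert n L * 'I_(n.-1),
    [/\ fparent u vc.1, fpath vc.1 = rcons (fpath u) c
      & fpath (phi vc.1) = rcons (fpath (phi u)) vc.2].
  have [v [v1 path_v]] : exists v, v.1 = u.1 /\ fpath v = rcons (fpath u) c.
    by apply: exists_fvert; rewrite size_rcons.
  have uv : fparent u v by apply/fparentP; split; last exists c.
  have /fparentP [_ [c' path_phiv]] := edge_preservingP _ ep _ _ uv.
  by exists (v, c').
have [f f_child] := fin_all_exists child.
have f_inj : injective (fun c => (f c).2).
  move=> c1 c2 eq_c'; have [uv1 path1 phi_path1] := f_child c1.
  have [uv2 path2 phi_path2] := f_child c2.
  have [[phi1 _] [phi2 _]] := (fparentP _ _ (edge_preservingP _ ep _ _ uv1),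
                               fparentP _ _ (edge_preservingP _ ep _ _ uv2)).
  have /perm_inj eq_v : phi (f c1).1 = phi (f c2).1.
    by apply: fvert_eq; rewrite ?phi1 ?phi2 // phi_path1 phi_path2 eq_c'.
  by move: path1; rewrite eq_v path2 => /rcons_inj [].
by exists (perm f_inj) => c; exists (f c).1; rewrite permE; case: (f_child c).
Qed.

End Forest.

Section ForestDistance.
Variables (R : realType) (n d L : nat) (w : nat -> R).
Implicit Types (G H K : agraph R n d) (phi psi : {perm fvert n L}).

Definition FD_argmin G H : {perm fvert n L} :=
  Order.arg_min 1%g (fun phi => edge_preserving phi) (fcost w G H).

Lemma FD_argminP G H :
  edge_preserving (FD_argmin G H) /\ FD L w G H = fcost w G H (FD_argmin G H).
Proof.
rewrite /FD_argmin; case: arg_minP => [|phi ep phi_min]; first exact: edge_preserving1.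
split=> //; apply/le_anti; rewrite bigmin_le_cond //=.
by apply/bigmin_geP; split; [apply/phi_min/edge_preserving1 | exact: phi_min].
Qed.

Lemma FD_le_fcost G H phi : edge_preserving phi -> FD L w G H <= fcost w G H phi.
Proof. exact: bigmin_le_cond. Qed.

Lemma fcostV G H phi : edge_preserving phi -> fcost w H G phi^-1 = fcost w G H phi.
Proof.
move=> ep; rewrite /fcost (reindex_inj (@perm_inj _ phi)); apply: eq_bigr => u _.
by rewrite permK (edge_preserving_level ep) norm2_distC.
Qed.

Section NonnegativeWeights.
Hypothesis w_ge0 : forall l, 0 <= w l.

Lemma fcost_ge0 G H phi : 0 <= fcost w G H phi.
Proof. by apply: sumr_ge0 => u _; rewrite mulr_ge0 ?norm2_ge0. Qed.

Lemma fcostM G H K phi psi : edge_preserving phi ->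
  fcost w G K (phi * psi) <= fcost w G H phi + fcost w H K psi.
Proof.
move=> ep; rewrite [fcost w H K psi](reindex_inj (@perm_inj _ phi)) -big_split.
apply: ler_sum => u _; rewrite /= permM (edge_preserving_level ep) -mulrDr.
by rewrite ler_wpM2l ?norm2_dist_triangle.
Qed.

Lemma FD_ge0 G H : 0 <= FD L w G H.
Proof. by have [_ ->] := FD_argminP G H; apply: fcost_ge0. Qed.

Lemma FD_refl G : FD L w G G = 0.
Proof.
apply/le_anti; rewrite FD_ge0 andbT (le_trans (FD_le_fcost G G (edge_preserving1 n L))) //.
by rewrite /fcost big1 // => u _; rewrite perm1 subrr norm2_0 mulr0.
Qed.

Lemma FD_triangle G H K : FD L w G K <= FD L w G H + FD L w H K.
Proof.
have [ep_phi ->] := FD_argminP G H; have [ep_psi ->] := FD_argminP H K.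
apply: le_trans (fcostM _ _ _ _ ep_phi).
exact/FD_le_fcost/edge_preservingM.
Qed.

End NonnegativeWeights.

Lemma FD_sym G H : FD L w G H = FD L w H G.
Proof.
suff FD_le G' H' : FD L w G' H' <= FD L w H' G' by apply/le_anti; rewrite !FD_le.
have [ep ->] := FD_argminP H' G'; rewrite -fcostV //.
exact/FD_le_fcost/edge_preservingV.
Qed.

Section PositiveWeights.
Hypothesis w_gt0 : forall l, 0 < w l.

Lemma fcost_eq0 G H phi :
  fcost w G H phi = 0 <-> forall u, flabel G u = flabel H (phi u).
Proof.
split=> [cost0 u|same_labels]; last first.
  by rewrite /fcost big1 // => u _; rewrite same_labels subrr norm2_0 mulr0.
have term_ge0 v : true -> 0 <= w (flevel v) * norm2 (flabel G v - flabel H (phi v)).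
  by move=> _; rewrite mulr_ge0 ?norm2_ge0 ?ltW.
have /eqP := psumr_eq0P term_ge0 cost0 (i := u) isT.
by rewrite mulf_eq0 gt_eqF //= norm2_eq0 subr_eq0 => /eqP.
Qed.

Lemma FD_eq0P G H :
  FD L w G H = 0 <->
  exists2 phi : {perm fvert n L}, edge_preserving phi & forall u, flabel G u = flabel H (phi u).
Proof.
split=> [|[phi ep /fcost_eq0 cost0]].
  by have [ep ->] := FD_argminP G H; move/fcost_eq0; exists (FD_argmin G H).
apply/le_anti; rewrite FD_ge0 => [|l]; last exact: ltW.
by rewrite andbT -cost0 FD_le_fcost.
Qed.

End PositiveWeights.

End ForestDistance.

Section Unrolling.
Variables (R : realType) (n d : nat).
Implicit Types (G H K : agraph R n d).

Lemma nbrs_size K x : valid_graph K -> (size (nbrs K x) <= n.-1)%N.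
Proof.
case=> _ loopless _; rewrite -ltnS (leq_trans _ (leqSpred n)) //.
rewrite -[n in (_ <= n)%N]size_enum_ord -/(size (x :: _)).
apply: uniq_leq_size => [|y _]; last by rewrite mem_enum.
by rewrite /= mem_filter (negbTE (loopless x)) filter_uniq ?enum_uniq.
Qed.

Lemma fstep_enum K x : valid_graph K ->
  map (fstep K x) (enum 'I_(n.-1)) =
  map Some (nbrs K x) ++ nseq (n.-1 - size (nbrs K x)) None.
Proof. by move=> vK; rewrite -(enum_ord_pad x) ?nbrs_size. Qed.

Definition owalk K (o : option 'I_n) (p : seq 'I_(n.-1)) : option 'I_n :=
  foldl (fun o c => obind (fstep K ^~ c) o) o p.

Definition unrolled K L (u : fvert n L) : option 'I_n := fwalk K u.1 (fpath u).

Lemma unrolled_root K L (u : fvert n L) : fpath u = [::] -> unrolled K u = Some u.1.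
Proof. by rewrite /unrolled => ->. Qed.

Lemma unrolled_rcons K L (u v : fvert n L) c :
  v.1 = u.1 -> fpath v = rcons (fpath u) c ->
  unrolled K v = obind (fstep K ^~ c) (unrolled K u).
Proof. by rewrite /unrolled /fwalk => -> ->; rewrite foldl_rcons. Qed.

End Unrolling.

Section Refinement.
Variables (R : realType) (n d : nat) (C : eqType).
Variables (c0 : 'rV[R]_d -> C) (relabel : C -> seq C -> C).
Hypotheses (c0_inj : injective c0) (relabel_inj : relabel_injective relabel).
Implicit Types (G H K : agraph R n d).
Local Notation wl K := (wl_color c0 relabel K).

Definition child_colour K t x (c : 'I_(n.-1)) : option C := omap (wl K t) (fstep K x c).

Lemma child_colour_enum K t x : valid_graph K ->
  map (child_colour K t x) (enum 'I_(n.-1)) =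
  map Some (map (wl K t) (nbrs K x)) ++ nseq (n.-1 - size (map (wl K t) (nbrs K x))) None.
Proof.
move=> vK; rewrite (map_comp (omap _) (fstep K x)) fstep_enum // map_cat map_nseq.
by rewrite size_map -!map_comp.
Qed.

Lemma wl_succ_eq G H t x y : valid_graph G -> valid_graph H ->
  wl G t.+1 x = wl H t.+1 y <->
  wl G t x = wl H t y /\
  exists pi : {perm 'I_(n.-1)}, forall c, child_colour G t x c = child_colour H t y (pi c).
Proof.
move=> vG vH; have children_perm :
    perm_eq (map (wl G t) (nbrs G x)) (map (wl H t) (nbrs H y)) <->
    exists pi : {perm 'I_(n.-1)}, forall c, child_colour G t x c = child_colour H t y (pi c).
  rewrite -(perm_eq_pad n.-1) -!child_colour_enum //.
  by split => /perm_eq_ordP.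
by rewrite -children_perm; apply: relabel_inj.
Qed.

Lemma wl_attr G H t x y : wl G t x = wl H t y -> attr G x = attr H y.
Proof. by elim: t x y => [|t IH] x y /=; [move/c0_inj | case/relabel_inj => /IH]. Qed.

Lemma flabel_eq_of_colour L G H t (u v : fvert n L) :
  omap (wl G t) (unrolled G u) = omap (wl H t) (unrolled H v) -> flabel G u = flabel H v.
Proof.
rewrite /flabel /unrolled; case: fwalk => [x|]; case: fwalk => [y|] //= [].
exact: wl_attr.
Qed.

Lemma colour0_eq_of_flabel L G H (u v : fvert n L) : valid_graph G -> valid_graph H ->
  flabel G u = flabel H v -> omap (wl G 0) (unrolled G u) = omap (wl H 0) (unrolled H v).
Proof.
case=> _ _ attrG_neq0 [_ _ attrH_neq0].
rewrite /flabel /unrolled; case: fwalk => [x|]; case: fwalk => [y|] //= eq_attr.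
- by rewrite eq_attr.
- by have := attrG_neq0 x; rewrite eq_attr eqxx.
- by have := attrH_neq0 y; rewrite -eq_attr eqxx.
Qed.

Section ColoursFromForestIsomorphism.
Variables (L : nat) (G H : agraph R n d) (phi : {perm fvert n L}).
Hypotheses (vG : valid_graph G) (vH : valid_graph H) (ep : edge_preserving phi).
Hypothesis same_labels : forall u, flabel G u = flabel H (phi u).

Lemma unrolled_colour_eq t u : (flevel u + t <= L)%N ->
  omap (wl G t) (unrolled G u) = omap (wl H t) (unrolled H (phi u)).
Proof.
elim: t u => [|t IH] u u_le; first exact: colour0_eq_of_flabel.
have u_lt : (flevel u < L)%N by apply: leq_trans u_le; rewrite -addn1 leq_add2l.
have := IH u (leq_trans _ u_le); rewrite leq_add2l => /(_ (leqnSn t)).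
case Gu: (unrolled G u) => [x|]; case Hu: (unrolled H (phi u)) => [y|] //= [eq_t].
congr Some; apply/wl_succ_eq => //; split=> //.
have [pi children] := edge_preserving_children ep u_lt; exists pi => c.
have [v [uv path_v phi_path_v]] := children c.
have [[v1 _] [phi_v1 _]] := (fparentP _ _ uv, fparentP _ _ (edge_preservingP _ ep _ _ uv)).
have := IH v; rewrite (fparent_level uv) addSnnS => /(_ u_le).
by rewrite (unrolled_rcons G v1 path_v) (unrolled_rcons H phi_v1 phi_path_v) Gu Hu.
Qed.

Lemma wl_colours_match : exists sigma : {perm 'I_n}, forall i, wl G L i = wl H L (sigma i).
Proof.
have [root root_spec] := fin_all_exists (fun i => @exists_fvert n L i [::] (leq0n L)).
have root_path i : fpath (phi (root i)) = [::].
  by apply/size0nil; rewrite -/(flevel _) (edge_preserving_level ep) /flevel (root_spec i).2.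
have sigma_inj : injective (fun i => (phi (root i)).1).
  move=> i j eq_ij; have /perm_inj : phi (root i) = phi (root j).
    by apply: fvert_eq; rewrite ?root_path.
  by move/(congr1 fst); rewrite (root_spec i).1 (root_spec j).1.
exists (perm sigma_inj) => i; rewrite permE.
have := @unrolled_colour_eq L (root i); rewrite /flevel (root_spec i).2 => /(_ (leqnn L)).
by rewrite (unrolled_root _ (root_spec i).2) (unrolled_root _ (root_path i)) (root_spec i).1 => -[].
Qed.

End ColoursFromForestIsomorphism.

Section ForestIsomorphismFromColours.
Variables (G H : agraph R n d).
Hypotheses (vG : valid_graph G) (vH : valid_graph H).

Definition child_perm t x y : {perm 'I_(n.-1)} :=
  odflt 1%g [pick pi : {perm 'I_(n.-1)} |
                [forall c, child_colour G t x c == child_colour H t y (pi c)]].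

Lemma child_permP t x y : wl G t.+1 x = wl H t.+1 y ->
  forall c, child_colour G t x c = child_colour H t y (child_perm t x y c).
Proof.
case/wl_succ_eq => // _ [pi pi_ok]; rewrite /child_perm.
case: pickP => [pi' /forallP pi'_ok c | /(_ pi) /forallP []]; first exact/eqP.
by move=> c; apply/eqP.
Qed.

Fixpoint transport t (ox oy : option 'I_n) (p : seq 'I_(n.-1)) : seq 'I_(n.-1) :=
  if p is c :: p' then
    (* Under padding vertices every label is zero, so any [pi] will do. *)
    let pi := if (ox, oy) is (Some x, Some y) then child_perm t.-1 x y else 1%g in
    pi c :: transport t.-1 (obind (fstep G ^~ c) ox) (obind (fstep H ^~ (pi c)) oy) p'
  else [::].

Lemma size_transport t ox oy p : size (transport t ox oy p) = size p.
Proof. by elim: p t ox oy => //= c p IH t ox oy; rewrite IH. Qed.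

Lemma take_transport t ox oy p k :
  take k (transport t ox oy p) = transport t ox oy (take k p).
Proof. by elim: p t ox oy k => [|c p IH] t ox oy [|k] //=; rewrite IH. Qed.

Lemma transport_inj t ox oy : injective (transport t ox oy).
Proof.
move=> p1 p2; elim: p1 t ox oy p2 => [|c1 p1 IH] t ox oy [|c2 p2] //=.
by case=> /perm_inj eq_c; subst c2 => /IH ->.
Qed.

Lemma transport_colour t ox oy p : (size p <= t)%N ->
  omap (wl G t) ox = omap (wl H t) oy ->
  omap (wl G (t - size p)) (owalk G ox p) =
  omap (wl H (t - size p)) (owalk H oy (transport t ox oy p)).
Proof.
elim: p t ox oy => [|c p IH] [|t] ox oy //=; rewrite ?subn0 // ltnS subSS => p_le eq_t.
apply: IH => //; case: ox oy eq_t => [x|] [y|] //= [/child_permP/(_ c)].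
by rewrite /child_colour.
Qed.

Variables (L : nat) (sigma : {perm 'I_n}).
Hypothesis colours_match : forall i, wl G L i = wl H L (sigma i).

Definition transport_path (u : fvert n L) : seq 'I_(n.-1) :=
  transport L (Some u.1) (Some (sigma u.1)) (fpath u).

Lemma size_transport_path u : size (transport_path u) == tag u.2.
Proof. by rewrite size_transport /fpath size_tuple. Qed.

Definition transport_fvert (u : fvert n L) : fvert n L :=
  (sigma u.1, existT (fun k : 'I_L.+1 => k.-tuple 'I_(n.-1)) (tag u.2)
                     (Tuple (size_transport_path u))).

Lemma fpath_transport_fvert u : fpath (transport_fvert u) = transport_path u.
Proof. by []. Qed.

Lemma transport_fvert_inj : injective transport_fvert.
Proof.
move=> u v eq_uv; have eq_u1 : u.1 = v.1 by apply: (@perm_inj _ sigma); case: eq_uv.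
apply: fvert_eq => //; have := congr1 (@fpath n L) eq_uv.
by rewrite !fpath_transport_fvert /transport_path eq_u1 => /transport_inj.
Qed.

Definition transport_perm : {perm fvert n L} := perm transport_fvert_inj.

Lemma transport_perm_edge_preserving : edge_preserving transport_perm.
Proof.
apply/edge_preservingP => u v /fparentP [v1 [c path_v]]; rewrite !permE.
apply/and3P; rewrite !fpath_transport_fvert /transport_path /= v1 !size_transport path_v.
by rewrite take_transport size_rcons -cats1 take_size_cat.
Qed.

Lemma transport_perm_labels u : flabel G u = flabel H (transport_perm u).
Proof.
rewrite permE; apply: (flabel_eq_of_colour (t := L - flevel u)).
have /transport_colour : omap (wl G L) (Some u.1) = omap (wl H L) (Some (sigma u.1)).
  by rewrite /= colours_match.
by move=> /(_ _ (flevel_le u)).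
Qed.

End ForestIsomorphismFromColours.

Lemma wl_indist_forestP L G H : valid_graph G -> valid_graph H ->
  wl_indist c0 relabel L G H <->
  exists2 phi : {perm fvert n L}, edge_preserving phi & forall u, flabel G u = flabel H (phi u).
Proof.
move=> vG vH; split => [/perm_eq_ordP [sigma colours_match] | [phi ep same_labels]].
  exists (transport_perm G H L sigma).
    exact: transport_perm_edge_preserving.
  exact: transport_perm_labels.
by apply/perm_eq_ordP; apply: (wl_colours_match vG vH ep same_labels).
Qed.

End Refinement.

Unset Implicit Arguments. Set Strict Implicit.

Theorem mainTheorem3 (R : realType) (n d : nat) (w : nat -> R)
    (hw : forall l, 0 < w l) (L : nat) :
  (forall G : agraph R n d, valid_graph G -> FD L w G G = 0) /\
  (forall G H : agraph R n d, valid_graph G -> valid_graph H ->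
     FD L w G H = FD L w H G) /\
  (forall G H K : agraph R n d, valid_graph G -> valid_graph H -> valid_graph K ->
     FD L w G K <= FD L w G H + FD L w H K) /\
  (forall (C : eqType) (c0 : 'rV[R]_d -> C) (relabel : C -> seq C -> C),
     injective c0 -> relabel_injective relabel ->
     forall G H : agraph R n d, valid_graph G -> valid_graph H ->
       FD L w G H = 0 <-> wl_indist c0 relabel L G H).
Proof.
have w_ge0 l : 0 <= w l by apply: ltW.
split; first by move=> G _; apply: (FD_refl L w_ge0).
split; first by move=> G H _ _; apply: FD_sym.
split; first by move=> G H K _ _ _; apply: (FD_triangle L w_ge0).
move=> C c0 relabel c0_inj relabel_inj G H vG vH.
rewrite (FD_eq0P L hw).
exact: iff_sym (wl_indist_forestP c0_inj relabel_inj L vG vH).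
Qed.
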